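(* Let $A,B\in\mathcal{M}_n$, let $\psi\colon H^*(M(A);\mathbb{Z})\to H^*(M(B);\mathbb{Z})$ be a graded ring isomorphism (also denoting its rationalization by $\psi$), and let $\sigma$ be a permutation of $\{1,\dots,n\}$ and $q_1,\dots,q_n$ nonzero rationals with $\psi(y^A_j)=q_jy^B_{\sigma(j)}$ for all $j$. Suppose $q_j=\pm\tfrac12$ for some $j$. Then there are $i<j$ and $c\in\mathbb{Z}\setminus\{0\}$ such that $\alpha^A_j=cy^A_i$. If $\alpha^A_j$ is not of even exceptional type, then $c$ is odd and $q_i=\pm2$. If neither $\alpha^A_j$ nor $\alpha^B_{\sigma(i)}$ is of even exceptional type, then $\alpha^B_{\sigma(i)}=d\,y^B_{\sigma(j)}$ for some odd integer $d$.
   Context: Let $\mathcal{M}_n$ be the set of integral strictly upper triangular $n\times n$ matrices $A=(A^i_j)$ ($A^i_j$ is the $(i,j)$ entry, and $A^i_j=0$ for $i\ge j$). For $A\in\mathcal{M}_n$, $M(A)$ denotes the Bott manifold obtained as the quotient of $(S^3)^n$ ($S^3\subset\mathbb{C}^2$ the unit sphere) by the free $(S^1)^n$-action $(g_1,\dots,g_n)\cdot((z_1,w_1),\dots,(z_n,w_n))=\big(((\prod_{k<j}g_k^{-A^k_j})g_jz_j,\ g_jw_j)\big)_{j=1}^n$. Let $x^A_j\in H^2(M(A);\mathbb{Z})$ be the first Chern class of the line bundle obtained as the quotient of $(S^3)^n\times\mathbb{C}$ where $g$ acts on the $\mathbb{C}$-factor by $g_j^{-1}$. Put $\alpha^A_j=\sum_{i<j}A^i_jx^A_i$.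 Then $H^*(M(A);\mathbb{Z})=\mathbb{Z}[x^A_1,\dots,x^A_n]/((x^A_j)^2-\alpha^A_jx^A_j\mid j=1,\dots,n)$. Define $y^A_j=x^A_j-\tfrac12\alpha^A_j\in H^2(M(A);\mathbb{Q})$. The same notation is used for $B$. We say $\alpha^A_j$ is of exceptional type if $\alpha^A_j=cy^A_i$ for some nonzero integer $c$ and some $i<j$, and of even exceptional type if moreover this integer $c$ is even. *)

From HB Require Import structures.
From mathcomp Require Import all_boot all_order all_algebra all_fingroup.
From mathcomp Require Import mpoly.
Set Implicit Arguments. Unset Strict Implicit. Unset Printing Implicit Defensive.
Import Order.TTheory GRing.Theory Num.Theory.
Local Open Scope ring_scope.

(* Indices 1..n of the paper are 'I_n (0-based). A matrix A : 'M[int]_n has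
   entries A i j = A^i_j. *)

Definition strict_upper (n : nat) (A : 'M[int]_n) : Prop :=
  forall i j : 'I_n, (j <= i)%N -> A i j = 0.

(* Integral presentation H^*(M(A);Z) = Z[x_1..x_n] / I_A,
   I_A = ((x_j)^2 - alpha_j x_j | j). *)
Definition alpha_poly (n : nat) (A : 'M[int]_n) (j : 'I_n) : {mpoly int[n]} :=
  \sum_(i < n | (i < j)%N) A i j *: 'X_i.

Definition rel_poly (n : nat) (A : 'M[int]_n) (j : 'I_n) : {mpoly int[n]} :=
  'X_j ^+ 2 - alpha_poly A j * 'X_j.

Definition in_ideal (n : nat) (A : 'M[int]_n) (p : {mpoly int[n]}) : Prop :=
  exists c : 'I_n -> {mpoly int[n]}, p = \sum_(k < n) c k * rel_poly A k.

(* A graded ring homomorphism H^*(M(A);Z) -> H^*(M(B);Z) is determined by the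
   images of the degree-2 generators, which are integral linear combinations
   x^A_j |-> sum_k P j k x^B_k (H^2 is free on the x^B_k).  It is well defined
   iff the induced substitution Z[x] -> Z[x] maps I_A into I_B. *)
Definition lin_image (n : nat) (P : 'M[int]_n) (j : 'I_n) : {mpoly int[n]} :=
  \sum_(k < n) P j k *: 'X_k.

Definition subst_poly (n : nat) (P : 'M[int]_n) (p : {mpoly int[n]}) : {mpoly int[n]} :=
  mmap (@mpolyC _ int) (lin_image P) p.

Definition graded_hom (n : nat) (A B P : 'M[int]_n) : Prop :=
  forall p : {mpoly int[n]}, in_ideal A p -> in_ideal B (subst_poly P p).

Definition graded_iso (n : nat) (A B P : 'M[int]_n) : Prop :=
  graded_hom A B P /\
  exists Q : 'M[int]_n, graded_hom B A Q /\ P *m Q = 1%:M /\ Q *m P = 1%:M.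

(* H^2(M(A);Q) = Q^n with basis x^A_1..x^A_n (row vectors of coordinates). *)
Definition xQ (n : nat) (j : 'I_n) : 'rV[rat]_n := delta_mx 0 j.

Definition alphaQ (n : nat) (A : 'M[int]_n) (j : 'I_n) : 'rV[rat]_n :=
  \sum_(i < n | (i < j)%N) (A i j)%:~R *: xQ i.

Definition yQ (n : nat) (A : 'M[int]_n) (j : 'I_n) : 'rV[rat]_n :=
  xQ j - (1 / 2 : rat) *: alphaQ A j.

Definition psiQ (n : nat) (P : 'M[int]_n) (v : 'rV[rat]_n) : 'rV[rat]_n :=
  v *m map_mx (fun z : int => z%:~R : rat) P.

Definition even_exceptional (n : nat) (A : 'M[int]_n) (j : 'I_n) : Prop :=
  exists (i : 'I_n) (c : int),
    (i < j)%N /\ c != 0 /\ alphaQ A j = c%:~R *: yQ A i /\ (2 %| c)%Z.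

From HB Require Import structures.
From mathcomp Require Import all_boot all_order all_algebra all_fingroup.
From mathcomp Require Import mpoly.
From mathcomp Require Import ring zify.
Import Order.TTheory GRing.Theory Num.Theory.
Set Implicit Arguments. Unset Strict Implicit. Unset Printing Implicit Defensive.
Local Open Scope ring_scope.

(* Put a := psi(alpha_j) and s := sigma j.  Since psi(x_j) = q_j y_s + a/2 is
   integral and q_j = +-1/2 is not, a_s <> 0; let t >= s be the last index with
   a_t <> 0.  Applying psi to x_j^2 = alpha_j x_j and reading off the x_m x_t
   coefficients (m < t) in H^4(M(B);Q) forces a = a_t y_t, so pulling back,
   alpha_j = c y_i with sigma i = t and c = A^i_j.  Integrality of psi(x_i) and
   psi^-1(x_t) makes 2 q_i and 2 / q_i integers, while psi(x_j)_t = c q_i / 2 is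
   an integer too; for c odd this leaves q_i = +-2.  Finally the same argument
   for psi^-1 at t gives alpha_t = d y_u, and comparing the integral row
   psi(x_j) = q_j y_s +- c (x_t - d/2 y_u) at index max(s, u) forces u = s. *)

Section Coordinates.
Variable n : nat.
Implicit Types (A P Q : 'M[int]_n) (u v : 'rV[rat]_n).

Lemma xQE (k p : 'I_n) : xQ k 0 p = (p == k)%:R.
Proof. by rewrite /xQ mxE eqxx. Qed.

Lemma alphaQE A (k p : 'I_n) :
  alphaQ A k 0 p = if (p < k)%N then (A p k)%:~R else 0.
Proof.
rewrite /alphaQ summxE big_mkcond (bigD1 p) //= big1 ?addr0.
  by case: ifP => _; rewrite ?mxE ?xQE ?eqxx ?mulr1.
move=> i ip; case: ifP => _ //.
by rewrite mxE xQE eq_sym (negbTE ip) mulr0.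
Qed.

Lemma yQE A (k p : 'I_n) :
  yQ A k 0 p = (p == k)%:R - 1 / 2 * (if (p < k)%N then (A p k)%:~R else 0).
Proof. by rewrite /yQ !mxE -alphaQE -xQE. Qed.

Lemma yQ_diag A (k : 'I_n) : yQ A k 0 k = 1.
Proof. by rewrite yQE eqxx ltnn mulr0 subr0. Qed.

Lemma yQ_gt A (k p : 'I_n) : (k < p)%N -> yQ A k 0 p = 0.
Proof. by move=> kp; rewrite yQE -val_eqE gtn_eqF // ltnNge ltnW //= mulr0 subr0. Qed.

Lemma yQ_lt A (k p : 'I_n) : (p < k)%N -> yQ A k 0 p = - (1 / 2) * (A p k)%:~R.
Proof. by move=> pk; rewrite yQE pk -val_eqE ltn_eqF // sub0r mulNr. Qed.

Lemma xQ_yQ A (k : 'I_n) : xQ k = yQ A k + (1 / 2) *: alphaQ A k.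
Proof. by rewrite /yQ subrK. Qed.

Lemma row_combE (a b : rat) u v (p : 'I_n) :
  (a *: u + b *: v) 0 p = a * u 0 p + b * v 0 p.
Proof. by rewrite !mxE. Qed.

Lemma psiQD P u v : psiQ P (u + v) = psiQ P u + psiQ P v.
Proof. by rewrite /psiQ mulmxDl. Qed.

Lemma psiQZ P (r : rat) v : psiQ P (r *: v) = r *: psiQ P v.
Proof. by rewrite /psiQ scalemxAl. Qed.

Lemma psiQ_sum P (I : Type) (r : seq I) (F : I -> 'rV[rat]_n) (Pr : pred I) :
  psiQ P (\sum_(i <- r | Pr i) F i) = \sum_(i <- r | Pr i) psiQ P (F i).
Proof. by rewrite /psiQ mulmx_suml. Qed.

Lemma psiQK P Q : P *m Q = 1%:M -> cancel (psiQ P) (psiQ Q).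
Proof.
move=> PQ v; rewrite /psiQ -mulmxA -map_mxM PQ.
suff -> : map_mx (fun z : int => z%:~R : rat) 1%:M = 1%:M :> 'M_n by rewrite mulmx1.
by apply/matrixP => i k; rewrite !mxE; case: (i == k).
Qed.

Lemma psiQ_xQE P (k p : 'I_n) : psiQ P (xQ k) 0 p = (P k p)%:~R.
Proof. by rewrite /psiQ /xQ -rowE !mxE. Qed.

Lemma psiQ_alphaQ P A (k : 'I_n) :
  psiQ P (alphaQ A k) = \sum_(i < n | (i < k)%N) (A i k)%:~R *: psiQ P (xQ i).
Proof. by rewrite psiQ_sum; apply: eq_bigr => i _; rewrite psiQZ. Qed.

Lemma psiQ_alphaQ_int P A (k p : 'I_n) : psiQ P (alphaQ A k) 0 p \is a Num.int.
Proof.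
rewrite psiQ_alphaQ summxE rpred_sum // => i _.
by rewrite mxE psiQ_xQE rpredM ?intr_int.
Qed.

End Coordinates.

Lemma in_ideal_rel_poly n (A : 'M[int]_n) (k : 'I_n) : in_ideal A (rel_poly A k).
Proof.
exists (fun l => (l == k)%:R); rewrite (bigD1 k) //= eqxx mul1r big1 ?addr0 //.
by move=> i /negbTE ->; rewrite mul0r.
Qed.

Lemma subst_poly_rel n (A P : 'M[int]_n) (k : 'I_n) :
  subst_poly P (rel_poly A k) = lin_image P k ^+ 2 -
    (\sum_(i < n | (i < k)%N) A i k *: lin_image P i) * lin_image P k.
Proof.
rewrite /subst_poly /rel_poly rmorphB rmorphXn rmorphM /= mmapX mmap1U.
rewrite /alpha_poly raddf_sum /=.
by under eq_bigr do rewrite mmapZ mmapX mmap1U mul_mpolyC.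
Qed.

Section MixedCoefficient.
Variable R : comRingType.
Implicit Types p : {poly {poly R}}.
Local Notation g := ('X : {poly {poly R}}).
Local Notation k := (('X)%:P : {poly {poly R}}).

Definition mixed_coef p : R := p`_1`_1.

Definition sq_ideal p : Prop := exists p1 p2, p = g ^+ 2 * p1 + k ^+ 2 * p2.

Lemma mixed_coefD p p' : mixed_coef (p + p') = mixed_coef p + mixed_coef p'.
Proof. by rewrite /mixed_coef !coefD. Qed.

Lemma mixed_coefB p p' : mixed_coef (p - p') = mixed_coef p - mixed_coef p'.
Proof. by rewrite /mixed_coef !coefB. Qed.

Lemma mixed_coef_gk (r : R) : mixed_coef (r%:P%:P * (g * k)) = r.
Proof.
by rewrite /mixed_coef mulrA mulrC mulrA -rmorphM coefMX coefC mulrC coefMX coefC.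
Qed.

Lemma mixed_coef_sq_ideal p : sq_ideal p -> mixed_coef p = 0.
Proof.
case=> p1 [p2 ->]; rewrite mixed_coefD /mixed_coef -rmorphXn /= coefXnM coefCM coefXnM.
by rewrite coef0 add0r.
Qed.

Lemma sq_ideal0 : sq_ideal 0.
Proof. by exists 0, 0; rewrite !mulr0 addr0. Qed.

Lemma sq_idealD p p' : sq_ideal p -> sq_ideal p' -> sq_ideal (p + p').
Proof. by case=> a [b ->] [c [d ->]]; exists (a + c), (b + d); ring. Qed.

Lemma sq_idealMl p' p : sq_ideal p -> sq_ideal (p' * p).
Proof. by case=> a [b ->]; exists (p' * a), (p' * b); ring. Qed.

Lemma mixed_coef_linear_forms (c r1 r2 s1 s2 : R) :
  let h := k + c%:P%:P * g in
  mixed_coef ((r1%:P%:P * h + r2%:P%:P * g) * (s1%:P%:P * h + s2%:P%:P * g))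
  = 2 * c * r1 * s1 + r1 * s2 + r2 * s1.
Proof.
move=> h; pose C (r : R) : {poly {poly R}} := r%:P%:P.
have CM r r' : C (r * r') = C r * C r' by rewrite /C !rmorphM.
have CD r r' : C (r + r') = C r + C r' by rewrite /C !rmorphD.
have C2 : C 2 = 2 by rewrite /C !rmorph_nat.
have -> : (C r1 * h + C r2 * g) * (C s1 * h + C s2 * g) =
   g ^+ 2 * (C (r1 * s1 * c ^+ 2 + (r1 * s2 + r2 * s1) * c + r2 * s2)) +
   k ^+ 2 * C (r1 * s1) + C (2 * c * r1 * s1 + r1 * s2 + r2 * s1) * (g * k).
  by rewrite !CD !CM C2 /h /C; ring.
rewrite mixed_coefD mixed_coef_gk mixed_coef_sq_ideal ?add0r //.
by do 2!eexists.
Qed.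

End MixedCoefficient.

(* The coefficient of x_m x_t (m < t) of u v in the basis of square-free
   monomials of H^*(M(B);Q): besides u_m v_t + u_t v_m, only the term
   B^m_t x_m x_t of x_t^2 = alpha_t x_t contributes. *)
Definition cup_coord n (B : 'M[int]_n) (m t : 'I_n) (u v : 'rV[rat]_n) : rat :=
  (B m t)%:~R * u 0 t * v 0 t + u 0 t * v 0 m + u 0 m * v 0 t.

Section CupCoordinate.
Variables (n : nat) (B : 'M[int]_n) (m t : 'I_n).
Hypothesis ltmt : (m < t)%N.
Local Notation C r := ((r : rat)%:P%:P : {poly {poly rat}}).
Local Notation g := ('X : {poly {poly rat}}).

(* The test morphism x_m |-> g, x_t |-> h, x_l |-> 0 otherwise, maps every
   relation of B into (g^2, k^2), with k := 'X%:P, because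
   h^2 - b g h = k^2 - (b/2)^2 g^2; on a product of two linear forms, the
   g k coefficient of the image is their cup_coord. *)
Let b : rat := (B m t)%:~R.
Let h : {poly {poly rat}} := 'X%:P + C (b / 2) * g.
Let test_var (l : 'I_n) : {poly {poly rat}} :=
  if l == m then g else if l == t then h else 0.
Local Notation test := (mmap (intr : int -> {poly {poly rat}}) test_var).
Let lift (u : 'rV[rat]_n) : {poly {poly rat}} := C (u 0 t) * h + C (u 0 m) * g.

Let test_X l : test 'X_l = test_var l.
Proof. by rewrite mmapX mmap1U. Qed.

Let test_scale (z : int) p : test (z *: p) = C z%:~R * test p.
Proof. by rewrite mmapZ -[z]intz !rmorph_int. Qed.

Let test_rel l : sq_ideal (test (rel_poly B l)).
Proof.
rewrite /rel_poly /alpha_poly rmorphB rmorphXn rmorphM /= raddf_sum /= test_X.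
under eq_bigr do rewrite test_scale test_X.
rewrite /test_var; case: (eqVneq l m) => [->|_].
  rewrite big1; first by exists 1, 0; ring.
  move=> i im; rewrite -!val_eqE /= (ltn_eqF im) (ltn_eqF (ltn_trans im ltmt)).
  exact: mulr0.
case: (eqVneq l t) => [->|_]; last by exists 0, 0; rewrite mulr0 expr2 mulr0 subr0; ring.
rewrite (bigD1 m) //= eqxx big1 ?addr0; last first.
  by move=> i /andP[it im]; rewrite (negbTE im) -val_eqE /= ltn_eqF // mulr0.
exists (- C (b / 2) ^+ 2), 1.
have -> : C b = 2 * C (b / 2).
  have two_b : b = 2 * (b / 2) by rewrite mulrC divfK ?pnatr_eq0.
  by rewrite {1}two_b !rmorphM /= !rmorph_nat.
rewrite /h; ring.
Qed.

Let test_sum (I : Type) (r : seq I) (Pr : pred I) (F : I -> {mpoly int[n]}) :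
  test (\sum_(i <- r | Pr i) F i) = \sum_(i <- r | Pr i) test (F i).
Proof. exact: rmorph_sum. Qed.

Let test_mul p p' : test (p * p') = test p * test p'.
Proof. exact: rmorphM. Qed.

Let test_sub p p' : test (p - p') = test p - test p'.
Proof. exact: rmorphB. Qed.

Let test_ideal p : in_ideal B p -> sq_ideal (test p).
Proof.
case=> c ->; rewrite test_sum; elim/big_ind: _ => [|x y|i _].
- exact: sq_ideal0.
- by move=> hx hy; apply: sq_idealD.
- by rewrite test_mul; apply: sq_idealMl.
Qed.

Let test_lin_image P i : test (lin_image P i) = lift (psiQ P (xQ i)).
Proof.
rewrite /lift !psiQ_xQE raddf_sum (bigD1 m) //= (bigD1 t) /=; last first.
  by rewrite -val_eqE /= gtn_eqF.
rewrite big1 ?addr0; last first.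
  by move=> l /andP[lm lt]; rewrite test_scale test_X /test_var (negbTE lm) (negbTE lt) mulr0.
by rewrite !test_scale !test_X /test_var eqxx -val_eqE /= gtn_eqF // eqxx addrC.
Qed.

Let lift_sum (I : Type) (r : seq I) (Pr : pred I) (c : I -> rat) (u : I -> 'rV[rat]_n) :
  lift (\sum_(i <- r | Pr i) c i *: u i) = \sum_(i <- r | Pr i) C (c i) * lift (u i).
Proof.
elim/big_rec2: _ => [|i p v _ <-]; rewrite /lift !mxE.
  by rewrite !rmorph0 !mul0r addr0.
by rewrite !rmorphD !rmorphM /=; ring.
Qed.

Let mixed_coef_lift u v : mixed_coef (lift u * lift v) = cup_coord B m t u v.
Proof.
rewrite mixed_coef_linear_forms /cup_coord -/b.
by rewrite (mulrC 2 (b / 2)) divfK ?pnatr_eq0 //; ring.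
Qed.

Lemma graded_hom_cup_coord A P (k : 'I_n) : graded_hom A B P ->
  let U := psiQ P (xQ k) in
  cup_coord B m t U U = cup_coord B m t (psiQ P (alphaQ A k)) U.
Proof.
move=> hom U; apply/eqP; rewrite -subr_eq0; apply/eqP.
have := mixed_coef_sq_ideal (test_ideal (hom _ (in_ideal_rel_poly A k))).
rewrite subst_poly_rel expr2 test_sub !test_mul test_lin_image test_sum.
under eq_bigr do rewrite test_scale test_lin_image.
by rewrite -lift_sum -psiQ_alphaQ mixed_coefB !mixed_coef_lift.
Qed.

End CupCoordinate.

Lemma cup_coord_yQ n (B : 'M[int]_n) (m t s : 'I_n) :
  (m < t)%N -> (s <= t)%N -> cup_coord B m t (yQ B s) (yQ B s) = 0.
Proof.
move=> mt; rewrite leq_eqVlt => /orP[/eqP/val_inj ->|st].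
  by rewrite /cup_coord yQ_diag yQ_lt //; field.
by rewrite /cup_coord yQ_gt // !(mulr0, mul0r, addr0).
Qed.

Lemma cup_coord_shift n (B : 'M[int]_n) (m t : 'I_n) (r : rat) (y a : 'rV[rat]_n) :
  let u := r *: y + (1 / 2) *: a in
  cup_coord B m t u u - cup_coord B m t a u =
  r ^+ 2 * cup_coord B m t y y - cup_coord B m t a a / 4.
Proof. by rewrite /cup_coord !mxE; field. Qed.

Lemma row_eq_scale_yQ n (B : 'M[int]_n) (a : 'rV[rat]_n) (t : 'I_n) :
  a 0 t != 0 -> (forall p : 'I_n, (t < p)%N -> a 0 p = 0) ->
  (forall m : 'I_n, (m < t)%N -> cup_coord B m t a a = 0) ->
  a = a 0 t *: yQ B t.
Proof.
move=> at0 top cup0; apply/matrixP => z p; rewrite (ord1 z) mxE.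
case: (ltngtP p t) => [pt|tp|/val_inj ->]; last by rewrite yQ_diag mulr1.
- have /eqP := cup0 _ pt; rewrite /cup_coord yQ_lt // -subr_eq0.
  have -> : (B p t)%:~R * a 0 t * a 0 t + a 0 t * a 0 p + a 0 p * a 0 t - 0
      = 2 * a 0 t * (a 0 p - a 0 t * (- (1 / 2) * (B p t)%:~R)) by field.
  by rewrite !mulf_eq0 pnatr_eq0 (negbTE at0) /= subr_eq0 => /eqP.
- by rewrite top // yQ_gt // mulr0.
Qed.

Lemma row_last_nonzero n (R : nmodType) (v : 'rV[R]_n) (s : 'I_n) : v 0 s != 0 ->
  exists t : 'I_n, [/\ (s <= t)%N, v 0 t != 0 & forall p : 'I_n, (t < p)%N -> v 0 p = 0].
Proof.
move=> vs0; have [t vt0 tmax] := @arg_maxnP _ s (fun i => v 0 i != 0) val vs0.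
exists t; split => // [|p]; first exact: tmax.
by apply: contraTeq; rewrite -leqNgt; apply: tmax.
Qed.

Lemma alphaQ_eq_scale_yQ n (A : 'M[int]_n) (i j : 'I_n) (r : rat) :
  r != 0 -> alphaQ A j = r *: yQ A i -> (i < j)%N /\ (A i j)%:~R = r.
Proof.
move=> r0 /(congr1 (fun v : 'rV[rat]_n => v 0 i)); rewrite mxE yQ_diag mulr1 alphaQE.
by case: ifP => [//|_ r0E]; rewrite -r0E eqxx in r0.
Qed.

Lemma odd_half_not_int (e : int) : ~~ (2 %| e)%Z -> (e%:~R / 2 : rat) \notin Num.int.
Proof.
move=> e_odd; apply/negP => /intrP[z hz]; move/negP: e_odd; apply.
by apply/dvdzP; exists z; apply: (@intr_inj rat); rewrite intrM -hz; field.
Qed.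

Lemma pm_half_not_int (r : rat) : r = 1 / 2 \/ r = - (1 / 2) -> r \notin Num.int.
Proof.
by case=> ->; [have := @odd_half_not_int 1 | have := @odd_half_not_int (-1)];
  rewrite ?mulrN ?mul1r ?mulN1r ?div1r.
Qed.

Section GradedIsoData.
Variables (n : nat) (A B P Q : 'M[int]_n) (sigma : 'S_n) (q : 'I_n -> rat).
Hypothesis hy : forall k, psiQ P (yQ A k) = q k *: yQ B (sigma k).

Lemma psiQ_xQ_yQ k :
  psiQ P (xQ k) = q k *: yQ B (sigma k) + (1 / 2) *: psiQ P (alphaQ A k).
Proof. by rewrite (xQ_yQ A) psiQD psiQZ hy. Qed.

Lemma intr_psiQ_xQ k p :
  (P k p)%:~R = q k * yQ B (sigma k) 0 p + 1 / 2 * psiQ P (alphaQ A k) 0 p.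
Proof. by rewrite -psiQ_xQE psiQ_xQ_yQ row_combE. Qed.

Lemma twice_q_int k : 2 * q k \is a Num.int.
Proof.
have -> : 2 * q k = 2 * (P k (sigma k))%:~R - psiQ P (alphaQ A k) 0 (sigma k).
  by rewrite intr_psiQ_xQ yQ_diag; field.
by rewrite rpredB ?psiQ_alphaQ_int // rpredM ?intr_int.
Qed.

Hypothesis hq0 : forall k, q k != 0.
Hypothesis PQ1 : P *m Q = 1%:M.

Lemma psiQ_inv_yQ k :
  psiQ Q (yQ B k) = (q ((sigma^-1)%g k))^-1 *: yQ A ((sigma^-1)%g k).
Proof.
have := congr1 (psiQ Q) (hy ((sigma^-1)%g k)).
by rewrite psiQK // permKV psiQZ => ->; rewrite scalerA mulVf ?scale1r.
Qed.

Hypothesis hom : graded_hom A B P.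

Lemma cup_coord_psiQ_alphaQ k (m t : 'I_n) : (m < t)%N -> (sigma k <= t)%N ->
  cup_coord B m t (psiQ P (alphaQ A k)) (psiQ P (alphaQ A k)) = 0.
Proof.
move=> mt kt; have /= /eqP := graded_hom_cup_coord mt k hom.
rewrite -subr_eq0 psiQ_xQ_yQ cup_coord_shift cup_coord_yQ // mulr0 sub0r.
by rewrite oppr_eq0 mulf_eq0 invr_eq0 pnatr_eq0 orbF => /eqP.
Qed.

Lemma psiQ_alphaQ_scale_yQ k : psiQ P (alphaQ A k) 0 (sigma k) != 0 ->
  exists t : 'I_n, [/\ (sigma k <= t)%N, psiQ P (alphaQ A k) 0 t != 0 &
    psiQ P (alphaQ A k) = psiQ P (alphaQ A k) 0 t *: yQ B t].
Proof.
move=> /row_last_nonzero[t [kt at0 top]]; exists t; split => //.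
apply: row_eq_scale_yQ => // m mt; exact: cup_coord_psiQ_alphaQ.
Qed.

Lemma alphaQ_half_exceptional j : q j = 1 / 2 \/ q j = - (1 / 2) ->
  exists i : 'I_n, [/\ (i < j)%N, A i j != 0,
    alphaQ A j = (A i j)%:~R *: yQ A i & (sigma j < sigma i)%N].
Proof.
move=> hj; set a := psiQ P (alphaQ A j).
have as0 : a 0 (sigma j) != 0.
  apply: contraNneq (pm_half_not_int hj) => as0.
  by have := intr_psiQ_xQ j (sigma j); rewrite yQ_diag -/a as0 mulr0 addr0 mulr1 => <-.
have [t [jt at0 ha]] := psiQ_alphaQ_scale_yQ as0.
set i := (sigma^-1)%g t; have hi : sigma i = t by rewrite permKV.
have hal : alphaQ A j = (a 0 t / q i) *: yQ A i.
  by apply: (can_inj (psiQK PQ1)); rewrite psiQZ hy hi scalerA divfK.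
have [ij hAij] := alphaQ_eq_scale_yQ (mulf_neq0 at0 (invr_neq0 (hq0 i))) hal.
exists i; split => //; first by rewrite -(intr_eq0 rat) hAij mulf_neq0 ?invr_neq0.
  by rewrite hAij.
rewrite hi ltn_neqAle jt andbT; apply: contraTneq ij => /val_inj ji.
by rewrite -hi in ji; rewrite (perm_inj ji) ltnn.
Qed.

End GradedIsoData.

Lemma odd_mul_dvd4_eq4 (c e f : int) :
  ~~ (2 %| c)%Z -> e * f = 4 -> (4 %| c * e)%Z -> e = 4 \/ e = -4.
Proof.
move=> c_odd hef; have : (-4 <= e <= 4)%R.
  have f0 : f != 0 by apply/eqP => f0; rewrite f0 mulr0 in hef.
  have [f_pos|f_neg] : (1 <= f)%R \/ (f <= -1)%R by lia.
  - by clear c_odd; nia.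
  - by clear c_odd; nia.
by case: e hef => [[|[|[|[|[|e]]]]]|[|[|[|[|e]]]]] //= hef _ hce; lia.
Qed.

Lemma eq_pm2_of_twice_int (r : rat) (c : int) : r != 0 -> ~~ (2 %| c)%Z ->
  2 * r \is a Num.int -> 2 / r \is a Num.int -> c%:~R * r / 2 \is a Num.int ->
  r = 2 \/ r = -2.
Proof.
move=> r0 c_odd /intrP[e he] /intrP[f hf] /intrP[z hz].
have hef : e * f = 4 by apply: (@intr_inj rat); rewrite intrM -he -hf; field.
have hce : (4 %| c * e)%Z.
  by apply/dvdzP; exists z; apply: (@intr_inj rat); rewrite !intrM -he -hz; field.
by case: (odd_mul_dvd4_eq4 c_odd hef hce) => e4; [left|right];
  apply: (@mulfI _ 2) => //; rewrite he e4.
Qed.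

Lemma yQ_index_eq_of_int_row n (B : 'M[int]_n) (s t u : 'I_n) (r : rat) (e d : int) :
  r = 1 / 2 \/ r = - (1 / 2) -> ~~ (2 %| e)%Z -> ~~ (2 %| d)%Z ->
  (s < t)%N -> (u < t)%N -> alphaQ B t = d%:~R *: yQ B u ->
  (forall p, (r *: yQ B s + e%:~R *: yQ B t) 0 p \is a Num.int) -> s = u.
Proof.
move=> hr e_odd d_odd st ut hal row_int.
have yt (p : 'I_n) : (p < t)%N -> yQ B t 0 p = - (d%:~R / 2) * yQ B u 0 p.
  by move=> pt; rewrite /yQ hal !mxE -[p == t]val_eqE /= ltn_eqF // sub0r; ring.
case: (ltngtP s u) => [su|us|/val_inj //].
  have := row_int u; rewrite row_combE yt // (yQ_gt _ su) yQ_diag.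
  have -> : r * 0 + e%:~R * (- (d%:~R / 2) * 1) = (- (e * d))%:~R / 2 :> rat.
    by rewrite intrN intrM; ring.
  have ed_odd : ~~ (2 %| - (e * d))%Z by nia.
  by move=> ed_int; case/negP: (odd_half_not_int ed_odd).
have := row_int s; rewrite row_combE yt // (yQ_gt _ us) yQ_diag mulr0 mulr0 addr0 mulr1.
by move=> r_int; case/negP: (pm_half_not_int hr).
Qed.

Theorem lemma4p4 (n : nat) (A B P : 'M[int]_n)
  (hA : strict_upper A) (hB : strict_upper B)
  (hpsi : graded_iso A B P)
  (sigma : 'S_n) (q : 'I_n -> rat)
  (hq0 : forall j, q j != 0)
  (hy : forall j, psiQ P (yQ A j) = q j *: yQ B (sigma j))
  (j : 'I_n) (hj : q j = 1 / 2 \/ q j = - (1 / 2)) :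
  exists (i : 'I_n) (c : int),
    (i < j)%N /\ c != 0 /\ alphaQ A j = c%:~R *: yQ A i /\
    (~ even_exceptional A j -> ~~ (2 %| c)%Z /\ (q i = 2 \/ q i = -2)) /\
    (~ even_exceptional A j -> ~ even_exceptional B (sigma i) ->
       exists d : int, ~~ (2 %| d)%Z /\
         alphaQ B (sigma i) = d%:~R *: yQ B (sigma j)).
Proof.
case: hpsi => hom [Q [homQ [PQ1 QP1]]].
have [i [ij Aij0 halA ltji]] := alphaQ_half_exceptional hy hq0 PQ1 hom hj.
set t := sigma i.
have Aij_odd : ~ even_exceptional A j -> ~~ (2 %| A i j)%Z.
  by move=> hne; apply/negP => Aij_even; apply: hne; exists i, (A i j).
have hxj : psiQ P (xQ j) = q j *: yQ B (sigma j) + ((A i j)%:~R * q i / 2) *: yQ B t.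
  by rewrite (psiQ_xQ_yQ hy) halA psiQZ hy !scalerA; congr (_ + _ *: _); ring.
have hinv := psiQ_inv_yQ hy hq0 PQ1.
have qi2 : ~ even_exceptional A j -> q i = 2 \/ q i = -2.
  move=> hne; apply: (eq_pm2_of_twice_int (hq0 i) (Aij_odd hne)).
  - exact: twice_q_int hy i.
  - by have := twice_q_int hinv t; rewrite /t permK.
  - rewrite -[X in X \is a _](_ : (P j t)%:~R = _) ?intr_int //.
    by rewrite -psiQ_xQE hxj row_combE (yQ_gt _ ltji) yQ_diag mulr0 add0r mulr1.
exists i, (A i j); split => //; split => //; split => //.
split => [hne|hne hneB]; first by split; [apply: Aij_odd | apply: qi2].
have qt : (q ((sigma^-1)%g t))^-1 = 1 / 2 \/ (q ((sigma^-1)%g t))^-1 = - (1 / 2).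
  by rewrite /t permK; case: (qi2 hne) => ->; [left|right]; rewrite ?invrN div1r.
have [u [ut But0 halB _]] :=
  alphaQ_half_exceptional hinv (fun k => invr_neq0 (hq0 _)) QP1 homQ qt.
have d_odd : ~~ (2 %| B u t)%Z.
  by apply/negP => d_even; apply: hneB; exists u, (B u t).
have [e [e_odd he]] : exists e : int, ~~ (2 %| e)%Z /\ e%:~R = (A i j)%:~R * q i / 2.
  have := Aij_odd hne; case: (qi2 hne) => -> c_odd;
    [exists (A i j) | exists (- A i j)]; split; rewrite ?intrN; try field; lia.
exists (B u t); split => //.
rewrite (yQ_index_eq_of_int_row hj e_odd d_odd ltji ut halB) // => p.
by rewrite he -hxj psiQ_xQE intr_int.
Qed.
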